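(* Assume $f<\frac{n}{3}$ and that the protocol satisfies the following requirement (R). Let $v_p$ be any validator that is honest at the time it sends a PROPOSE message for chain $\chi_p$ in a slot $t$ with $4\Delta t\ge\max(\mathsf{GST},\mathsf{GAT})+4\Delta$. Then chain $\chi_p$ is justified at slot $t+1$ (i.e., the checkpoint $(\chi_p,t+1)$ becomes justified), and finalized at slot $t+2$. In particular, for every validator $v_i\in H_{4\Delta(t+2)+2\Delta}$, $\chi_p\preceq\chi^{\mathrm{fin},4\Delta(t+2)+2\Delta}_i$ and $\mathsf{txpool}^{4\Delta t}\subseteq\chi^{\mathrm{fin},4\Delta(t+2)+2\Delta}_i$. Requirement (R): (R1) In any slot $t'$, if an always-honest validator $v_i$ casts an FFG-vote $\mathcal{S}_i\to\mathcal{T}_i$ during round $r$, then (a) the vote is valid; (b) there is a set of messages $\mathcal{V}^{\mathsf{FFGvote},t'}_i\subseteq\mathcal{V}^r_i$ with $\mathcal{S}_i=\mathrm{GJ}(\mathcal{V}^{\mathsf{FFGvote},t'}_i)$; (c) $\mathcal{T}_i.c=t'$. (R2) If a PROPOSE message for chain $\chi_p$ is sent in round $4\Delta t\ge\max(\mathsf{GST},\mathsf{GAT})+\Delta$ by a proposer honest in that round, then: (a) $\chi_p$ includes all transactions in $\mathsf{txpool}^{4\Delta t}$; (b) in slot $t$, all always-honest validators cast valid FFG-votes with the same source checkpoint $\mathcal{S}$ and targets $\mathcal{T}_i$ with $\mathcal{T}_i.\chi\preceq\chi_p$; (c) in slot $t+1$: for every always-honest $v_i$, $\mathcal{V}^{\mathsf{FFGvote},t+1}_i$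 contains $\mathcal{V}^{\mathsf{FFGvote},t}_j$ for every always-honest $v_j$ and all FFG-votes sent by always-honest validators in slot $t$; and every always-honest $v_i$ sends an FFG-vote $\mathcal{S}_i\to\mathcal{T}_i$ with $\mathcal{T}_i.\chi=\chi_p$; (d) in slot $t+2$: for every always-honest $v_i$, $\mathcal{V}^{\mathsf{FFGvote},t+2}_i$ contains $\mathcal{V}^{\mathsf{FFGvote},t+1}_j$ for every always-honest $v_j$ and all FFG-votes sent by always-honest validators in slot $t+1$; and for every validator $v_i$ honest in round $r^*=4\Delta(t+2)+2\Delta$, (i) $\mathcal{V}^{r^*}_i$ contains all FFG-votes cast by always-honest validators in slot $t+2$ and (ii) $\chi^{\mathrm{fin},r^*}_i=\max\{\chi:\chi\preceq\mathrm{GF}(\mathcal{V}^{r^*}_i).\chi\ \wedge\ \chi.p\le\chi_p.p\}$.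
   Context: There are $n$ validators, at most $f$ of which are ever corrupted by an adaptive adversary; a validator is always-honest if it is never corrupted. Time is divided into rounds; slot $t$ consists of rounds $[4\Delta t,4\Delta(t+1))$ and proposals for slot $t$ are made at round $4\Delta t$. The network is partially synchronous: after an unknown time $\mathsf{GST}$, messages are delivered within $\Delta$ rounds; after an unknown time $\mathsf{GAT}$, all validators are always awake. $H_r$ denotes the set of honest validators active (awake and having completed joining) at round $r$. $\mathcal{V}^r_i$ is the view (set of messages received) of $v_i$ at round $r$; $\chi^{\mathrm{fin},r}_i$ is the finalized chain output by $v_i$ at round $r$; $\mathsf{txpool}^r$ is the (ever-growing) set of transactions available at round $r$, and a transaction is in a chain if it is in one of its blocks. Blocks $(b,p)$, chains identified with their last block, $\chi.p$ = slot of the last block, $\preceq$ = prefix. Checkpoints $\mathcal{C}=(\chi,c)$; FFG-vote $\mathcal{C}_1\to\mathcal{C}_2$ valid iff $\mathcal{C}_1.c<\mathcal{C}_2.c$ and $\mathcal{C}_1.\chi\preceq\mathcal{C}_2.\chi$. In a view $\mathcal{V}$: $\mathcal{C}$ is justified iff $\mathcal{C}=(B_{\text{genesis}},0)$ or there are votes in $\mathcal{V}$ from at least $\frac{2}{3}n$ distinct validators with valid FFG-votes $\mathcal{S}\to\mathcal{T}$, $\mathcal{S}$ justified in $\mathcal{V}$, $\mathcal{S}.\chi\preceq\mathcal{C}.\chi\preceq\mathcal{T}.\chi$, $\mathcal{T}.c=\mathcal{C}.c$; $\mathcal{C}$ is finalized iff $\mathcal{C}=(B_{\text{genesis}},0)$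 or $\mathcal{C}$ is justified and there are votes in $\mathcal{V}$ from at least $\frac{2}{3}n$ distinct validators with valid FFG-votes $\mathcal{C}\to\mathcal{T}$, $\mathcal{T}.c=\mathcal{C}.c+1$. Checkpoints are preordered by $\mathcal{C}\le\mathcal{C}'$ iff $\mathcal{C}.c<\mathcal{C}'.c$ or ($\mathcal{C}.c=\mathcal{C}'.c$ and $\mathcal{C}.\chi.p\le\mathcal{C}'.\chi.p$). $\mathrm{GJ}(\mathcal{V})$ (resp. $\mathrm{GF}(\mathcal{V})$) is a maximal justified (resp. finalized) checkpoint in $\mathcal{V}$ for this preorder, ties broken arbitrarily. A chain $\chi$ is justified (finalized) if $\chi=\mathcal{C}.\chi$ for a justified (finalized) checkpoint $\mathcal{C}$. *)

From mathcomp Require Import all_boot.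

Set Implicit Arguments.
Unset Strict Implicit.
Unset Printing Implicit Defensive.

Section Model.

Variable n : nat.            (* validators are 'I_n *)
Variables Tx Bc : eqType.    (* transactions, block contents *)
Variable bgen : Bc.          (* content of the genesis block *)
Variable btx : Bc -> Tx -> bool.   (* btx b x : transaction x is in block content b *)
Variable O : Type.           (* payloads of all other protocol messages *)

(* A block is a pair (b, p) of content and slot. *)
Definition block := (Bc * nat)%type.

(* A chain is a sequence of blocks starting with the genesis block (B_genesis, 0)
   with strictly increasing slots; it is identified with its last block. *)
Definition wf_chain (s : seq block) : bool :=
  (ohead s == Some (bgen, 0)) && sorted ltn (map snd s).

Definition chain := {s : seq block | wf_chain s}.

Definition cprefix (c1 c2 : chain) : bool := prefix (sval c1) (sval c2).

(* chi.p : slot of the last block *)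
Definition cslot (c : chain) : nat := (last (bgen, 0) (sval c)).2.

Definition tx_in (x : Tx) (c : chain) : bool := has (fun b => btx b.1 x) (sval c).

Lemma wf_genesis : wf_chain [:: (bgen, 0)].
Proof. by rewrite /wf_chain /= eqxx. Qed.

Definition genesis_chain : chain := exist _ [:: (bgen, 0)] wf_genesis.

Definition ckpt := (chain * nat)%type.
Definition genesis_ckpt : ckpt := (genesis_chain, 0).

Definition valid_vote (S T : ckpt) : bool := (S.2 < T.2) && cprefix S.1 T.1.

Definition ckpt_le (C C' : ckpt) : bool :=
  (C.2 < C'.2) || ((C.2 == C'.2) && (cslot C.1 <= cslot C'.1)).

(* messages: FFG votes (sender, source, target), proposals, and anything else *)
Inductive msg :=
| FFGVote of 'I_n & ckpt & ckpt
| Propose of 'I_n & chain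
| OtherMsg of O.

Definition view := msg -> Prop.

Definition subview (V W : view) : Prop := forall m, V m -> W m.

Inductive justified (V : view) : ckpt -> Prop :=
| justified_genesis : justified V genesis_ckpt
| justified_votes (C : ckpt) (A : {set 'I_n}) :
    2 * n <= 3 * #|A| ->
    (forall v, v \in A -> exists S T,
        V (FFGVote v S T) /\ valid_vote S T /\ justified V S /\
        cprefix S.1 C.1 /\ cprefix C.1 T.1 /\ T.2 = C.2) ->
    justified V C.

Definition finalized (V : view) (C : ckpt) : Prop :=
  C = genesis_ckpt \/
  (justified V C /\
   exists A : {set 'I_n}, 2 * n <= 3 * #|A| /\
     forall v, v \in A -> exists T,
       V (FFGVote v C T) /\ valid_vote C T /\ T.2 = C.2.+1).

(* C may be GJ(V) / GF(V): a maximal justified / finalized checkpoint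
   (ties broken arbitrarily) *)
Definition is_GJ (V : view) (C : ckpt) : Prop :=
  justified V C /\ forall C', justified V C' -> ckpt_le C' C.
Definition is_GF (V : view) (C : ckpt) : Prop :=
  finalized V C /\ forall C', finalized V C' -> ckpt_le C' C.

Definition is_max_prefix_upto (c g : chain) (q : nat) : Prop :=
  cprefix c g /\ cslot c <= q /\
  forall c', cprefix c' g -> cslot c' <= q -> cprefix c' c.

Record execution := Execution {
  ex_view : 'I_n -> nat -> view;
  ex_sends : 'I_n -> nat -> msg -> Prop;  (* messages sent by v_i in round r *)
  ex_corrupt : 'I_n -> option nat;        (* Some r0: corrupted from round r0 on; None: always honest *)
  ex_active : 'I_n -> nat -> Prop;        (* awake and having completed joining *)
  ex_fin : 'I_n -> nat -> chain;
  ex_txpool : nat -> Tx -> Prop;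
  ex_ffgview : 'I_n -> nat -> view        (* V^{FFGvote,t}_i *)
}.

Variable E : execution.

Definition honest (i : 'I_n) (r : nat) : Prop :=
  match ex_corrupt E i with None => True | Some r0 => r < r0 end.
Definition always_honest (i : 'I_n) : Prop := ex_corrupt E i = None.
Definition in_H (r : nat) (i : 'I_n) : Prop := honest i r /\ ex_active E i r.

Definition corruption_bound (f : nat) : Prop :=
  #|[set i : 'I_n | ex_corrupt E i != None]| <= f.

Variable Delta : nat.
Definition slot_of (r : nat) : nat := r %/ (4 * Delta).

Definition synchrony (GST : nat) : Prop :=
  forall (j : 'I_n) r m r' (i : 'I_n),
    honest j r -> (ex_sends E j r m \/ ex_view E j r m) ->
    maxn r GST + Delta <= r' -> in_H r' i -> ex_view E i r' m.

(* Authentication: FFG votes of always-honest validators cannot be forged. *)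
Definition authenticated : Prop :=
  forall (i : 'I_n) r (j : 'I_n) S T,
    always_honest j -> ex_view E i r (FFGVote j S T) ->
    exists r0, r0 <= r /\ ex_sends E j r0 (FFGVote j S T).

(* An always-honest validator casts at most one FFG vote per slot
   (its vote of slot t' is the one based on V^{FFGvote,t'}_i). *)
Definition one_vote_per_slot : Prop :=
  forall (j : 'I_n) r1 r2 S1 T1 S2 T2,
    always_honest j -> ex_sends E j r1 (FFGVote j S1 T1) ->
    ex_sends E j r2 (FFGVote j S2 T2) -> slot_of r1 = slot_of r2 ->
    S1 = S2 /\ T1 = T2.

Definition R1 : Prop :=
  forall (i : 'I_n) r S T,
    always_honest i -> ex_sends E i r (FFGVote i S T) ->
    [/\ valid_vote S T,
        subview (ex_ffgview E i (slot_of r)) (ex_view E i r),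
        is_GJ (ex_ffgview E i (slot_of r)) S
      & T.2 = slot_of r].

Definition has_honest_votes_of_slot (t : nat) (V : view) : Prop :=
  forall (j : 'I_n) r S T, always_honest j -> slot_of r = t ->
    ex_sends E j r (FFGVote j S T) -> V (FFGVote j S T).

Definition R2 (GST GAT : nat) : Prop :=
  forall (t : nat) (p : 'I_n) (chip : chain),
    maxn GST GAT + Delta <= 4 * Delta * t ->
    honest p (4 * Delta * t) -> ex_sends E p (4 * Delta * t) (Propose p chip) ->
    [/\
        (forall x, ex_txpool E (4 * Delta * t) x -> tx_in x chip),
        (exists S, forall i, always_honest i -> exists r T,
            slot_of r = t /\ ex_sends E i r (FFGVote i S T) /\
            valid_vote S T /\ cprefix T.1 chip),
        (forall i, always_honest i ->
           (forall j, always_honest j ->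
              subview (ex_ffgview E j t) (ex_ffgview E i t.+1)) /\
           has_honest_votes_of_slot t (ex_ffgview E i t.+1) /\
           exists r S T, slot_of r = t.+1 /\
             ex_sends E i r (FFGVote i S T) /\ T.1 = chip)
      &
        (forall i, always_honest i ->
           (forall j, always_honest j ->
              subview (ex_ffgview E j t.+1) (ex_ffgview E i t.+2)) /\
           has_honest_votes_of_slot t.+1 (ex_ffgview E i t.+2) /\
           exists r S T, slot_of r = t.+2 /\ ex_sends E i r (FFGVote i S T)) /\
        (let rs := 4 * Delta * t.+2 + 2 * Delta in
         forall i, honest i rs ->
           has_honest_votes_of_slot t.+2 (ex_view E i rs) /\
           exists C, is_GF (ex_view E i rs) C /\
             is_max_prefix_upto (ex_fin E i rs) C.1 (cslot chip))].

End Model.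

From mathcomp Require Import all_boot.
From mathcomp Require Import zify.

(* Since f < n/3, the always-honest validators form a 2/3-quorum and every
   2/3-quorum contains an always-honest validator.  In slot t+1 every
   always-honest validator votes with target chain chip, and it votes only
   once per slot, so every justified checkpoint of epoch t+1 has a chain that
   is a prefix of chip; those same votes justify (chip, t+1).  In slot t+2
   this is therefore the greatest justified checkpoint, so every always-honest
   vote of slot t+2 has source (chip, t+1) and finalizes it.  Honest votes
   never have an epoch beyond their slot, so at round 4Δ(t+2)+2Δ no checkpoint
   of a later epoch is finalized: (chip, t+1) is the greatest finalized
   checkpoint, and the finalized chain, the greatest prefix of chip with slot
   at most that of chip, is chip itself. *)

Set Implicit Arguments.
Unset Strict Implicit.
Unset Printing Implicit Defensive.

Section Chains.

Variables (Bc : eqType) (bgen : Bc).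

Lemma cprefix_refl (c : chain bgen) : cprefix c c.
Proof. exact: prefix_refl. Qed.

Lemma cprefix_cslot_eq (c1 c2 : chain bgen) :
  cprefix c1 c2 -> cslot c2 <= cslot c1 -> c1 = c2.
Proof.
case: c1 c2 => [s1 wf1] [s2 wf2]; rewrite /cprefix /cslot /= => /prefixP [s def_s2].
subst s2; case: s wf2 => [|x s] wf2 slot_le; first by apply: val_inj; rewrite /= cats0.
exfalso; case: s1 wf1 wf2 slot_le => [//|y s1] _ /andP [_].
rewrite map_cat (sorted_pairwise ltn_trans) pairwise_cat => /and3P [/allrelP lt_slots _ _].
rewrite last_cat /= leqNgt lt_slots //; apply: map_f; exact: mem_last.
Qed.

Lemma tx_in_cprefix (Tx : eqType) (btx : Bc -> Tx -> bool) x (c1 c2 : chain bgen) :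
  cprefix c1 c2 -> tx_in btx x c1 -> tx_in btx x c2.
Proof. by rewrite /cprefix /tx_in => /prefixP [s ->]; rewrite has_cat => ->. Qed.

Lemma ckpt_le_cprefix_eq (chi : chain bgen) c (C : ckpt bgen) :
  C.2 <= c -> ckpt_le (chi, c) C -> (C.2 = c -> cprefix C.1 chi) -> C = (chi, c).
Proof.
case: C => chi' c' /= le_c; rewrite /ckpt_le /= => /orP [lt_c | /andP [/eqP eq_c le_slot]] pre.
  by move: (leq_trans lt_c le_c); rewrite ltnn.
by subst c'; rewrite (cprefix_cslot_eq (pre erefl) le_slot).
Qed.

End Chains.

Section Views.

Variables (n : nat) (Bc : eqType) (bgen : Bc) (O : Type).

(* [justified] is nested under an existential, so its generated induction
   principle has no hypothesis for the sources: recurse with [fix]. *)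
Lemma justified_subview (V W : view n bgen O) :
  subview V W -> forall C, justified V C -> justified W C.
Proof.
move=> sub_VW; fix IH 2 => C [|{}C A quorum votes]; first exact: justified_genesis.
apply: (justified_votes quorum) => v /votes [S [T [seen [valid [S_just rest]]]]].
exists S, T; split; first exact: sub_VW.
by split=> //; split; first exact: IH.
Qed.

Lemma finalized_justified (V : view n bgen O) C : finalized V C -> justified V C.
Proof. by case=> [-> | []]; first exact: justified_genesis. Qed.

End Views.

Section Protocol.

Variables (n f Delta GST : nat) (Tx Bc : eqType) (bgen : Bc) (O : Type).
Variable E : execution n Tx bgen O.

Hypotheses (f_lt : 3 * f < n) (few_corrupt : corruption_bound E f).
Hypotheses (auth : authenticated E) (one_vote : one_vote_per_slot E Delta).
Hypothesis votes_R1 : R1 E Delta.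

Lemma always_honest_honest i r : always_honest E i -> honest E i r.
Proof. by rewrite /honest => ->. Qed.

Lemma quorum_always_honest : 2 * n <= 3 * #|[set i | ex_corrupt E i == None]|.
Proof.
set H := [set i | _].
have corrupt_H : ~: H = [set i | ex_corrupt E i != None].
  by apply/setP => i; rewrite !inE.
move: few_corrupt (cardsC H); rewrite /corruption_bound -corrupt_H card_ord; lia.
Qed.

Lemma quorum_has_always_honest (A : {set 'I_n}) :
  2 * n <= 3 * #|A| -> exists2 v, v \in A & always_honest E v.
Proof.
move=> quorum_A.
have [/exists_inP [v vA /eqP hv] | ] := boolP [exists v in A, ex_corrupt E v == None].
  by exists v.
rewrite negb_exists_in => /forall_inP all_corrupt.
have A_corrupt : A \subset [set i | ex_corrupt E i != None].
  by apply/subsetP => v /all_corrupt; rewrite inE.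
have := leq_trans (subset_leq_card A_corrupt) few_corrupt; lia.
Qed.

Lemma finalized_epoch_lt_slot k r C :
  finalized (ex_view E k r) C -> C = genesis_ckpt bgen \/ C.2 < slot_of Delta r.
Proof.
case=> [-> | [_ [A [quorum_A votes]]]]; [by left | right].
have [v vA hv] := quorum_has_always_honest quorum_A.
have [T [seen [_ T_epoch]]] := votes v vA.
have [r0 [le_r0 sent]] := auth hv seen.
have [_ _ _ T_slot] := votes_R1 hv sent.
by rewrite -ltnS -T_epoch T_slot; apply: leq_div2r.
Qed.

Variables (t : nat) (chip : chain bgen).

Hypothesis votes_for_chip : forall i, always_honest E i ->
  exists r S T, slot_of Delta r = t.+1 /\ ex_sends E i r (FFGVote O i S T) /\ T.1 = chip.

Lemma honest_vote_target_chip k r v S T :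
  always_honest E v -> ex_view E k r (FFGVote O v S T) -> T.2 = t.+1 -> T.1 = chip.
Proof.
move=> hv seen T_epoch.
have [r0 [_ sent]] := auth hv seen.
have [_ _ _ T_slot] := votes_R1 hv sent.
have [r1 [S1 [T1 [slot_r1 [sent1 <-]]]]] := votes_for_chip hv.
have same_slot : slot_of Delta r0 = slot_of Delta r1 by rewrite -T_slot T_epoch slot_r1.
by have [_ ->] := one_vote hv sent sent1 same_slot.
Qed.

Lemma justified_epoch_cprefix (V : view n bgen O) k r C :
  subview V (ex_view E k r) -> justified V C -> C.2 = t.+1 -> cprefix C.1 chip.
Proof.
move=> sub_V [//|{}C A quorum_A votes] C_epoch.
have [v vA hv] := quorum_has_always_honest quorum_A.
have [S [T [seen [_ [_ [_ [C_T T_epoch]]]]]]] := votes v vA.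
by rewrite -(honest_vote_target_chip hv (sub_V _ seen) (etrans T_epoch C_epoch)).
Qed.

Lemma justified_chip (V : view n bgen O) :
  has_honest_votes_of_slot E Delta t.+1 V ->
  (forall v, always_honest E v -> subview (ex_ffgview E v t.+1) V) ->
  justified V (chip, t.+1).
Proof.
move=> has_votes has_views.
apply: (justified_votes quorum_always_honest) => v; rewrite inE => /eqP hv.
have [r [S [T [slot_r [sent T_chip]]]]] := votes_for_chip hv.
have [valid _ [S_just _] T_slot] := votes_R1 hv sent.
exists S, T; split; first exact: has_votes sent.
split=> //; split; first by apply: (justified_subview (has_views v hv)); rewrite -slot_r.
move: valid => /andP [_]; rewrite T_chip T_slot slot_r => S_chip.
by split=> //; split; first exact: cprefix_refl.
Qed.

Hypothesis slot2_votes : forall i, always_honest E i ->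
  (forall j, always_honest E j ->
     subview (ex_ffgview E j t.+1) (ex_ffgview E i t.+2)) /\
  has_honest_votes_of_slot E Delta t.+1 (ex_ffgview E i t.+2) /\
  exists r S T, slot_of Delta r = t.+2 /\ ex_sends E i r (FFGVote O i S T).

Lemma justified_chip_ffgview j :
  always_honest E j -> justified (ex_ffgview E j t.+2) (chip, t.+1).
Proof. by move=> hj; have [views [votes _]] := slot2_votes hj; apply: justified_chip. Qed.

Lemma slot2_vote_source v r S T : always_honest E v -> slot_of Delta r = t.+2 ->
  ex_sends E v r (FFGVote O v S T) -> S = (chip, t.+1).
Proof.
move=> hv slot_r sent.
have [valid sub [S_just S_max] T_slot] := votes_R1 hv sent.
rewrite slot_r in sub S_just S_max T_slot.
apply: ckpt_le_cprefix_eq.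
- by move: valid => /andP [+ _]; rewrite T_slot.
- exact/S_max/justified_chip_ffgview.
- exact: justified_epoch_cprefix sub S_just.
Qed.

Local Notation rs := (4 * Delta * t.+2 + 2 * Delta).

Hypotheses (Delta_gt0 : 0 < Delta) (GST_le : GST <= 4 * Delta * t).
Hypothesis sync : synchrony E Delta GST.

Lemma slot_of_rs : slot_of Delta rs = t.+2.
Proof. by rewrite /slot_of mulnC divnMDl ?divn_small ?addn0 //; lia. Qed.

Lemma slot_succ_delivered_by_rs r : slot_of Delta r = t.+1 -> maxn r GST + Delta <= rs.
Proof.
move=> slot_r; have slot_gt0 : 0 < 4 * Delta by rewrite muln_gt0.
by have := ltn_ceil r slot_gt0; rewrite -/(slot_of Delta r) slot_r; nia.
Qed.

Variable i : 'I_n.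
Hypothesis i_in_H : in_H E rs i.
Hypothesis view_votes : has_honest_votes_of_slot E Delta t.+2 (ex_view E i rs).

Lemma justified_chip_view : justified (ex_view E i rs) (chip, t.+1).
Proof.
apply: justified_chip => [v r S T hv slot_r sent | v hv m in_ffgview].
  apply: sync (always_honest_honest r hv) _ (slot_succ_delivered_by_rs slot_r) i_in_H.
  by left.
have [r [S [T [slot_r [sent _]]]]] := votes_for_chip hv.
have [_ sub _ _] := votes_R1 hv sent.
apply: sync (always_honest_honest r hv) _ (slot_succ_delivered_by_rs slot_r) i_in_H.
by right; apply: sub; rewrite slot_r.
Qed.

Lemma finalized_chip_view : finalized (ex_view E i rs) (chip, t.+1).
Proof.
right; split; first exact: justified_chip_view.
exists [set v | ex_corrupt E v == None]; split; first exact: quorum_always_honest.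
move=> v; rewrite inE => /eqP hv.
have [_ [_ [r [S [T [slot_r sent]]]]]] := slot2_votes hv.
have S_chip := slot2_vote_source hv slot_r sent; subst S.
have [valid _ _ T_slot] := votes_R1 hv sent.
exists T; split; first exact: view_votes sent.
by rewrite valid T_slot slot_r.
Qed.

Lemma GF_chain_chip C : is_GF (ex_view E i rs) C -> C.1 = chip.
Proof.
move=> [C_fin C_max].
suff -> : C = (chip, t.+1) by [].
apply: ckpt_le_cprefix_eq.
- by case: (finalized_epoch_lt_slot C_fin) => [-> | ]; rewrite ?slot_of_rs.
- exact/C_max/finalized_chip_view.
- exact: justified_epoch_cprefix (fun _ seen => seen) (finalized_justified C_fin).
Qed.

End Protocol.

Theorem theorem4p5 (n f Delta GST GAT : nat) (Tx Bc : eqType) (bgen : Bc)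
  (btx : Bc -> Tx -> bool) (O : Type) (E : execution n Tx bgen O) :
  0 < Delta ->
  3 * f < n ->
  corruption_bound E f ->
  synchrony E Delta GST ->
  authenticated E ->
  one_vote_per_slot E Delta ->
  R1 E Delta ->
  R2 btx E Delta GST GAT ->
  forall (t : nat) (p : 'I_n) (chip : chain bgen),
    maxn GST GAT + 4 * Delta <= 4 * Delta * t ->
    honest E p (4 * Delta * t) ->
    ex_sends E p (4 * Delta * t) (Propose O p chip) ->
    (forall j, always_honest E j ->
       justified (ex_ffgview E j t.+2) (chip, t.+1)) /\
    (let rs := 4 * Delta * t.+2 + 2 * Delta in
     forall i, in_H E rs i ->
       [/\ justified (ex_view E i rs) (chip, t.+1),
           finalized (ex_view E i rs) (chip, t.+1),
           cprefix chip (ex_fin E i rs)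
         & forall x, ex_txpool E (4 * Delta * t) x -> tx_in btx x (ex_fin E i rs)]).
Proof.
move=> Delta_gt0 f_lt few_corrupt sync auth one_vote votes_R1 votes_R2
  t p chip after_GST honest_p proposed.
have [chip_txs _ slot1 [slot2_votes at_rs]] := votes_R2 t p chip ltac:(lia) honest_p proposed.
have votes_for_chip j hj := (slot1 j hj).2.2.
have GST_le : GST <= 4 * Delta * t by lia.
split=> [j hj | rs i in_H_i].
  exact: (justified_chip_ffgview f_lt few_corrupt votes_R1 votes_for_chip slot2_votes hj).
have [view_votes [C [C_GF fin_max]]] := at_rs i in_H_i.1.
have C_chip := GF_chain_chip f_lt few_corrupt auth one_vote votes_R1 votes_for_chip
  slot2_votes Delta_gt0 GST_le sync in_H_i view_votes C_GF.
have chip_fin : cprefix chip (ex_fin E i rs).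
  by apply: fin_max.2.2 => //; rewrite C_chip; apply: cprefix_refl.
split=> //.
- exact: (justified_chip_view f_lt few_corrupt votes_R1 votes_for_chip
    Delta_gt0 GST_le sync in_H_i).
- exact: (finalized_chip_view f_lt few_corrupt auth one_vote votes_R1 votes_for_chip
    slot2_votes Delta_gt0 GST_le sync in_H_i view_votes).
- by move=> x /chip_txs; apply: tx_in_cprefix chip_fin.
Qed.
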